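(* Define the relation $\succeq^1$ on $\mathcal{A}$ by $\mathbf{A}\succeq^1\mathbf{B}\iff\nu(\mathbf{A})\ge\nu(\mathbf{B})$, where for $\mathbf{A}=[a_{ij}]$ of size $n$, $\nu(\mathbf{A})=\min_{1\le i<j<k\le n}\max\{a_{ij}a_{jk}/a_{ik},\ a_{ik}/(a_{ij}a_{jk})\}$. Then $\succeq^1$ is an inconsistency ranking that satisfies IIP, HTE, SI, MON and RED, but does not satisfy PR.
   Context: A pairwise comparison matrix of size $n$ is a matrix $\mathbf{A}=[a_{ij}]\in\mathbb{R}^{n\times n}$ with all entries positive and $a_{ji}=1/a_{ij}$ for all $i,j$. Let $\mathcal{A}$ denote the set of all pairwise comparison matrices of all sizes $n\ge 3$. For $\mathbf{A}\in\mathcal{A}$ of size $n$ and $3\le m\le n$, a submatrix of $\mathbf{A}$ is a matrix $\mathbf{B}=[b_{ij}]$ of size $m$ with $b_{ij}=a_{\sigma(i)\sigma(j)}$ for some strictly increasing map $\sigma:\{1,\dots,m\}\to\{1,\dots,n\}$. A triad is a pairwise comparison matrix of size $3$; a triad of $\mathbf{A}$ is a submatrix of $\mathbf{A}$ of size $3$ (when $n=3$, $\mathbf{A}$ is its own unique triad). A triad $\mathbf{T}$ is written $\mathbf{T}=(t_1;t_2;t_3)$, meaning $t_{12}=t_1$, $t_{13}=t_2$, $t_{23}=t_3$ (the remaining entries are determined by reciprocity); $\mathbf{T}^\top$ denotes its transpose, i.e. the triad $(1/t_1;1/t_2;1/t_3)$. An inconsistency ranking is a complete and transitive binary relation $\succeq$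 on $\mathcal{A}$; $\mathbf{A}\sim\mathbf{B}$ means $\mathbf{A}\succeq\mathbf{B}$ and $\mathbf{B}\succeq\mathbf{A}$; $\mathbf{A}\preceq\mathbf{B}$ means $\mathbf{B}\succeq\mathbf{A}$. Properties of an inconsistency ranking $\succeq$: (PR) for all $s_2,t_2\ge 1$: $(1;s_2;1)\succeq(1;t_2;1)\iff s_2\le t_2$. (IIP) $\mathbf{T}\sim\mathbf{T}^\top$ for every triad $\mathbf{T}$. (HTE) $(1;t_2;t_3)\sim(1;t_2/t_3;1)$ for all $t_2,t_3>0$. (SI) $(t_1;t_2;t_3)\sim(kt_1;k^2t_2;kt_3)$ for all $t_1,t_2,t_3>0$ and all $k>0$. (MON) $\mathbf{A}\preceq\mathbf{T}$ for every $\mathbf{A}\in\mathcal{A}$ and every triad $\mathbf{T}$ of $\mathbf{A}$. (RED) every $\mathbf{A}\in\mathcal{A}$ has a triad $\mathbf{T}$ with $\mathbf{A}\sim\mathbf{T}$. *)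

(* classical real numbers. Indices are 0-based: entry a_{ij}
   of the paper (1 <= i,j <= n) is [pcm_a A (i-1) (j-1)]. *)
From Stdlib Require Import Reals List Arith.
Import ListNotations.
Open Scope R_scope.

(* A pairwise comparison matrix of size n >= 3 (the set \mathcal{A}).
   Only entries with indices < n are meaningful. *)
Record PCM := mkPCM {
  pcm_n : nat;
  pcm_a : nat -> nat -> R;
  pcm_n_ge3 : (3 <= pcm_n)%nat;
  pcm_pos : forall i j, (i < pcm_n)%nat -> (j < pcm_n)%nat -> 0 < pcm_a i j;
  pcm_rec : forall i j, (i < pcm_n)%nat -> (j < pcm_n)%nat ->
              pcm_a j i = / pcm_a i j
}.

Definition triples (n : nat) : list (nat * nat * nat) :=
  flat_map (fun i =>
    flat_map (fun j =>
      map (fun k => (i, j, k)) (seq (S j) (n - S j)))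
    (seq (S i) (n - S i)))
  (seq 0 n).

Definition triple_val (a : nat -> nat -> R) (t : nat * nat * nat) : R :=
  let '(i, j, k) := t in
  Rmax (a i j * a j k / a i k) (a i k / (a i j * a j k)).

Definition list_min (l : list R) : R :=
  match l with
  | [] => 1
  | x :: l' => fold_left Rmin l' x
  end.

Definition nu (A : PCM) : R :=
  list_min (map (triple_val (pcm_a A)) (triples (pcm_n A))).

Definition ge1 (A B : PCM) : Prop := nu A >= nu B.

Definition equivR (ge : PCM -> PCM -> Prop) (A B : PCM) : Prop :=
  ge A B /\ ge B A.

Definition inconsistency_ranking (ge : PCM -> PCM -> Prop) : Prop :=
  (forall A B, ge A B \/ ge B A) /\
  (forall A B C, ge A B -> ge B C -> ge A C).

Definition is_triad (T : PCM) (t1 t2 t3 : R) : Prop :=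
  pcm_n T = 3%nat /\ pcm_a T 0 1 = t1 /\ pcm_a T 0 2 = t2 /\ pcm_a T 1 2 = t3.

Definition submatrix (B A : PCM) : Prop :=
  (pcm_n B <= pcm_n A)%nat /\
  exists sigma : nat -> nat,
    (forall i j, (i < j)%nat -> (j < pcm_n B)%nat -> (sigma i < sigma j)%nat) /\
    (forall i, (i < pcm_n B)%nat -> (sigma i < pcm_n A)%nat) /\
    (forall i j, (i < pcm_n B)%nat -> (j < pcm_n B)%nat ->
        pcm_a B i j = pcm_a A (sigma i) (sigma j)).

Definition triad_of (T A : PCM) : Prop := pcm_n T = 3%nat /\ submatrix T A.

Definition PR (ge : PCM -> PCM -> Prop) : Prop :=
  forall (s2 t2 : R) (S T : PCM), 1 <= s2 -> 1 <= t2 ->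
    is_triad S 1 s2 1 -> is_triad T 1 t2 1 -> (ge S T <-> s2 <= t2).

Definition IIP (ge : PCM -> PCM -> Prop) : Prop :=
  forall (t1 t2 t3 : R) (T U : PCM),
    is_triad T t1 t2 t3 -> is_triad U (/ t1) (/ t2) (/ t3) -> equivR ge T U.

Definition HTE (ge : PCM -> PCM -> Prop) : Prop :=
  forall (t2 t3 : R) (T U : PCM), 0 < t2 -> 0 < t3 ->
    is_triad T 1 t2 t3 -> is_triad U 1 (t2 / t3) 1 -> equivR ge T U.

Definition SI (ge : PCM -> PCM -> Prop) : Prop :=
  forall (t1 t2 t3 k : R) (T U : PCM), 0 < t1 -> 0 < t2 -> 0 < t3 -> 0 < k ->
    is_triad T t1 t2 t3 -> is_triad U (k * t1) (k ^ 2 * t2) (k * t3) ->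
    equivR ge T U.

Definition MON (ge : PCM -> PCM -> Prop) : Prop :=
  forall A T : PCM, triad_of T A -> ge T A.

Definition RED (ge : PCM -> PCM -> Prop) : Prop :=
  forall A : PCM, exists T : PCM, triad_of T A /\ equivR ge A T.

(* nu is the minimum, over the triads of A, of the symmetric deviation
   max(x, 1/x) of the triad ratio x = t1 t3 / t2.  Hence the ranking is
   induced by a real function (complete and transitive), a triad's rank
   depends only on max(x, 1/x) (IIP, HTE, SI), every triad is ranked at
   least as high as the whole matrix (MON), and the minimum is attained at
   some triad (RED).  PR fails because nu (1; s; 1) = s for s >= 1, so the
   ordering of such triads is reversed. *)
From Stdlib Require Import Reals List Lia Lra.
Import ListNotations.
Open Scope R_scope.

Lemma fold_left_Rmin_le (l : list R) (x : R) :
  fold_left Rmin l x <= x /\ (forall y, In y l -> fold_left Rmin l x <= y).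
Proof.
  revert x; induction l as [|a l IH]; intros x; simpl.
  - split; [lra | tauto].
  - destruct (IH (Rmin x a)) as [Hx Hl]; split.
    + pose proof (Rmin_l x a); lra.
    + intros y [<-|Hy]; [pose proof (Rmin_r x a); lra | auto].
Qed.

Lemma fold_left_Rmin_In (l : list R) (x : R) :
  fold_left Rmin l x = x \/ In (fold_left Rmin l x) l.
Proof.
  revert x; induction l as [|a l IH]; intros x; simpl; [auto|].
  destruct (Rle_dec x a) as [Hxa|Hxa].
  - rewrite (Rmin_left _ _ Hxa); destruct (IH x); auto.
  - rewrite (Rmin_right x a) by lra; destruct (IH a); auto.
Qed.

Lemma list_min_le (l : list R) (y : R) : In y l -> list_min l <= y.
Proof.
  destruct l as [|a l]; [intros []|]; simpl; intros [<-|Hy].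
  - apply (proj1 (fold_left_Rmin_le l a)).
  - apply (proj2 (fold_left_Rmin_le l a)), Hy.
Qed.

Lemma list_min_In (l : list R) : l <> [] -> In (list_min l) l.
Proof.
  destruct l as [|a l]; [congruence|]; intros _; simpl.
  destruct (fold_left_Rmin_In l a) as [->|Hin]; auto.
Qed.

Lemma In_triples (n i j k : nat) :
  In (i, j, k) (triples n) <-> (i < j /\ j < k /\ k < n)%nat.
Proof.
  unfold triples; rewrite in_flat_map; split.
  - intros [i' [Hi' H]]; rewrite in_flat_map in H; destruct H as [j' [Hj' H]].
    rewrite in_map_iff in H; destruct H as [k' [E Hk']]; inversion E; subst.
    apply in_seq in Hi'; apply in_seq in Hj'; apply in_seq in Hk'; lia.
  - intros Hijk; exists i; split; [apply in_seq; lia|].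
    rewrite in_flat_map; exists j; split; [apply in_seq; lia|].
    apply in_map_iff; exists k; split; [reflexivity | apply in_seq; lia].
Qed.

Lemma nu_le_triple_val (A : PCM) (i j k : nat) :
  (i < j < k)%nat -> (k < pcm_n A)%nat -> nu A <= triple_val (pcm_a A) (i, j, k).
Proof.
  intros Hijk Hk; apply list_min_le, in_map, In_triples; lia.
Qed.

Lemma nu_attained (A : PCM) :
  exists i j k, (i < j < k)%nat /\ (k < pcm_n A)%nat /\
    nu A = triple_val (pcm_a A) (i, j, k).
Proof.
  assert (Hne : map (triple_val (pcm_a A)) (triples (pcm_n A)) <> []).
  { pose proof (pcm_n_ge3 A) as Hn.
    assert (H012 : In (0, 1, 2)%nat (triples (pcm_n A))) by (apply In_triples; lia).
    intros E; apply (in_map (triple_val (pcm_a A))) in H012; rewrite E in H012.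
    destruct H012. }
  apply list_min_In, in_map_iff in Hne.
  destruct Hne as [[[i j] k] [Hval Hin]]; apply In_triples in Hin.
  exists i, j, k; repeat split; try lia; symmetry; exact Hval.
Qed.

Lemma nu_size3 (T : PCM) : pcm_n T = 3%nat -> nu T = triple_val (pcm_a T) (0, 1, 2)%nat.
Proof. intros H; unfold nu; rewrite H; reflexivity. Qed.

Definition recip_max (x : R) : R := Rmax x (/ x).

Lemma recip_max_inv (x : R) : recip_max (/ x) = recip_max x.
Proof. unfold recip_max; rewrite Rinv_inv; apply Rmax_comm. Qed.

Lemma recip_max_ge1 (x : R) : 1 <= x -> recip_max x = x.
Proof.
  intros Hx; unfold recip_max; apply Rmax_left.
  assert (/ x <= 1) by (rewrite <- Rinv_1; apply Rinv_le_contravar; lra); lra.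
Qed.

Lemma is_triad_pos (T : PCM) (t1 t2 t3 : R) :
  is_triad T t1 t2 t3 -> 0 < t1 /\ 0 < t2 /\ 0 < t3.
Proof.
  intros [Hn [H1 [H2 H3]]]; subst; repeat split; apply pcm_pos; lia.
Qed.

Lemma nu_is_triad (T : PCM) (t1 t2 t3 : R) :
  is_triad T t1 t2 t3 -> nu T = recip_max (t1 * t3 / t2).
Proof.
  intros HT; destruct (is_triad_pos T t1 t2 t3 HT) as [h1 [h2 h3]].
  destruct HT as [Hn [H1 [H2 H3]]]; rewrite nu_size3 by exact Hn; simpl.
  rewrite H1, H2, H3; unfold recip_max; f_equal; field; lra.
Qed.

Lemma ge1_equiv_of_nu_eq (A B : PCM) : nu A = nu B -> equivR ge1 A B.
Proof. unfold equivR, ge1; intros E; rewrite E; lra. Qed.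

Lemma ge1_inconsistency_ranking : inconsistency_ranking ge1.
Proof. unfold ge1; split; intros; lra. Qed.

Lemma ge1_IIP : IIP ge1.
Proof.
  intros t1 t2 t3 T U HT HU; apply ge1_equiv_of_nu_eq.
  destruct (is_triad_pos T t1 t2 t3 HT) as [h1 [h2 h3]].
  rewrite (nu_is_triad T t1 t2 t3 HT), (nu_is_triad U _ _ _ HU), <- recip_max_inv.
  f_equal; field; lra.
Qed.

Lemma ge1_HTE : HTE ge1.
Proof.
  intros t2 t3 T U h2 h3 HT HU; apply ge1_equiv_of_nu_eq.
  rewrite (nu_is_triad T _ _ _ HT), (nu_is_triad U _ _ _ HU).
  f_equal; field; lra.
Qed.

Lemma ge1_SI : SI ge1.
Proof.
  intros t1 t2 t3 k T U h1 h2 h3 hk HT HU; apply ge1_equiv_of_nu_eq.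
  rewrite (nu_is_triad T _ _ _ HT), (nu_is_triad U _ _ _ HU).
  f_equal; field; lra.
Qed.

Lemma ge1_MON : MON ge1.
Proof.
  intros A T [Hn [_ [s [Hmono [Hrange Hentry]]]]]; apply Rle_ge.
  rewrite (nu_size3 T Hn); simpl; rewrite !Hentry by lia.
  apply nu_le_triple_val; [split; apply Hmono | apply Hrange]; lia.
Qed.

Definition sel3 (i j k x : nat) : nat :=
  match x with 0 => i | 1 => j | _ => k end%nat.

Lemma sel3_lt (i j k n x : nat) :
  (i < j < k)%nat -> (k < n)%nat -> (x < 3)%nat -> (sel3 i j k x < n)%nat.
Proof. intros; destruct x as [|[|x]]; simpl; lia. Qed.

Definition subtriad (A : PCM) (i j k : nat)
    (Hijk : (i < j < k)%nat) (Hk : (k < pcm_n A)%nat) : PCM :=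
  mkPCM 3 (fun x y => pcm_a A (sel3 i j k x) (sel3 i j k y)) ltac:(lia)
    (fun x y hx hy => pcm_pos A _ _ (sel3_lt i j k _ x Hijk Hk hx)
                                    (sel3_lt i j k _ y Hijk Hk hy))
    (fun x y hx hy => pcm_rec A _ _ (sel3_lt i j k _ x Hijk Hk hx)
                                    (sel3_lt i j k _ y Hijk Hk hy)).

Lemma subtriad_triad_of (A : PCM) i j k Hijk Hk :
  triad_of (subtriad A i j k Hijk Hk) A.
Proof.
  split; [reflexivity|]; split; [simpl; pose proof (pcm_n_ge3 A); lia|].
  exists (sel3 i j k); simpl; repeat split.
  - intros [|[|x]] [|[|y]]; simpl; lia.
  - intros x Hx; apply sel3_lt; auto.
Qed.

Lemma ge1_RED : RED ge1.
Proof.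
  intros A; destruct (nu_attained A) as [i [j [k [Hijk [Hk Hval]]]]].
  exists (subtriad A i j k Hijk Hk); split; [apply subtriad_triad_of|].
  apply ge1_equiv_of_nu_eq; rewrite Hval, (nu_size3 (subtriad A i j k Hijk Hk)) by reflexivity.
  reflexivity.
Qed.

(* Entries with an index outside 0..2 are junk. *)
Definition triad_entries (t1 t2 t3 : R) (i j : nat) : R :=
  match i, j with
  | 0, 1 => t1 | 0, 2 => t2 | 1, 2 => t3
  | 1, 0 => / t1 | 2, 0 => / t2 | 2, 1 => / t3
  | _, _ => 1 end.

Lemma triad_entries_pos (t1 t2 t3 : R) : 0 < t1 -> 0 < t2 -> 0 < t3 ->
  forall i j, (i < 3)%nat -> (j < 3)%nat -> 0 < triad_entries t1 t2 t3 i j.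
Proof.
  intros h1 h2 h3 [|[|[|i]]] [|[|[|j]]] Hi Hj; simpl; try lia; try lra;
  apply Rinv_0_lt_compat; assumption.
Qed.

Lemma triad_entries_rec (t1 t2 t3 : R) :
  forall i j, (i < 3)%nat -> (j < 3)%nat ->
  triad_entries t1 t2 t3 j i = / triad_entries t1 t2 t3 i j.
Proof.
  intros [|[|[|i]]] [|[|[|j]]] Hi Hj; simpl; try lia;
  rewrite ?Rinv_inv, ?Rinv_1; reflexivity.
Qed.

Definition mkTriad (t1 t2 t3 : R) (h1 : 0 < t1) (h2 : 0 < t2) (h3 : 0 < t3) : PCM :=
  mkPCM 3 (triad_entries t1 t2 t3) ltac:(lia)
    (triad_entries_pos t1 t2 t3 h1 h2 h3) (triad_entries_rec t1 t2 t3).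

Lemma mkTriad_is_triad t1 t2 t3 h1 h2 h3 : is_triad (mkTriad t1 t2 t3 h1 h2 h3) t1 t2 t3.
Proof. repeat split. Qed.

Lemma nu_triad_1s1 (T : PCM) (s : R) : 1 <= s -> is_triad T 1 s 1 -> nu T = s.
Proof.
  intros Hs HT; rewrite (nu_is_triad T _ _ _ HT).
  replace (1 * 1 / s) with (/ s) by (field; lra).
  rewrite recip_max_inv; apply recip_max_ge1, Hs.
Qed.

Lemma ge1_not_PR : ~ PR ge1.
Proof.
  intros HPR.
  assert (h1 : 0 < 1) by lra; assert (h2 : 0 < 2) by lra.
  pose (S := mkTriad 1 2 1 h1 h2 h1); pose (T := mkTriad 1 1 1 h1 h1 h1).
  assert (HS : is_triad S 1 2 1) by apply mkTriad_is_triad.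
  assert (HT : is_triad T 1 1 1) by apply mkTriad_is_triad.
  assert (HST : ge1 S T).
  { unfold ge1; rewrite (nu_triad_1s1 S 2), (nu_triad_1s1 T 1); auto; lra. }
  apply (HPR 2 1 S T) in HST; auto; lra.
Qed.

Theorem mainTheorem2 :
  inconsistency_ranking ge1 /\ IIP ge1 /\ HTE ge1 /\ SI ge1 /\
  MON ge1 /\ RED ge1 /\ ~ PR ge1.
Proof.
  exact (conj ge1_inconsistency_ranking (conj ge1_IIP (conj ge1_HTE
          (conj ge1_SI (conj ge1_MON (conj ge1_RED ge1_not_PR)))))).
Qed.
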